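(* Let $T=\langle 1,b,c\rangle$ with $1<b<c$ and $\gcd(b,c)=1$. Then $\mathcal H_1=\mathrm L(c,1,b,0)$ is an L-shape related to $T$ with $(\delta,\theta)=(1,0)$, and the L-shape $$\mathcal H_2=\begin{cases}\mathrm L(b,2,2b-c,1)&\text{if }c<2b,\\ \mathrm L(b,1+\lfloor c/b\rfloor,b-r,1)&\text{if }c>2b,\text{ where }c=\lfloor c/b\rfloor b+r,\ 0\le r<b,\end{cases}$$ is related to $T$ with $(\delta,\theta)=(0,1)$.
   Context: $T=\langle a,b,c\rangle=\{xa+yb+zc:x,y,z\in\mathbb N\}$ (here $a=1$). For $(i,j)\in\mathbb N^2$ let $[\![i,j]\!]=[i,i+1)\times[j,j+1)\subset\mathbb R^2$. For integers $0\le w<l$, $0\le y<h$, the L-shape $\mathrm L(l,h,w,y)$ is the set of unit squares $[\![i,j]\!]$ with $0\le i<l$, $0\le j<h$, excluding those with $i\ge l-w$ and $j\ge h-y$ (it has $lh-wy$ squares). An L-shape $\mathcal H$ is related to $T$ if it consists of exactly $c$ squares, every residue class modulo $c$ equals $ia+jb \bmod c$ for exactly one $[\![i,j]\!]\in\mathcal H$, and for each $[\![i,j]\!]\in\mathcal H$, $ia+jb=\min\{sa+tb:(s,t)\in\mathbb N^2,\ sa+tb\equiv ia+jb \pmod c\}$. For an L-shape $\mathrm L(l,h,w,y)$, $\delta=(la-yb)/c$ and $\theta=(hb-wa)/c$. *)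

From HB Require Import structures.
From mathcomp Require Import all_boot all_order all_algebra.
Set Implicit Arguments. Unset Strict Implicit. Unset Printing Implicit Defensive.
Import Order.TTheory GRing.Theory Num.Theory.

(* Square [[i,j]] is represented by the pair (i,j) : nat * nat. *)

Definition is_Lshape (l h w y : nat) : bool := (w < l) && (y < h).

Definition inL (l h w y : nat) (i j : nat) : bool :=
  [&& i < l, j < h & ~~ ((l - w <= i) && (h - y <= j))].

Definition Lsquares (l h w y : nat) : seq (nat * nat) :=
  [seq p <- [seq (i, j) | i <- iota 0 l, j <- iota 0 h] | inL l h w y p.1 p.2].

Definition sqval (a b : nat) (p : nat * nat) : nat := p.1 * a + p.2 * b.

Definition related (a b c : nat) (H : seq (nat * nat)) : Prop :=
  [/\ size H = c,
      (forall k, k < c -> count (fun p => sqval a b p %% c == k) H = 1) &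
      (forall p, p \in H -> forall s t : nat,
          s * a + t * b = sqval a b p %[mod c] -> sqval a b p <= s * a + t * b)].

Local Open Scope ring_scope.

Definition Ldelta (a b c : nat) (l h w y : nat) : rat :=
  ((l * a)%N%:R - (y * b)%N%:R) / c%:R.
Definition Ltheta (a b c : nat) (l h w y : nat) : rat :=
  ((h * b)%N%:R - (w * a)%N%:R) / c%:R.

From HB Require Import structures.
From mathcomp Require Import all_boot all_order all_algebra.
From mathcomp Require Import zify.
Import Order.TTheory GRing.Theory Num.Theory.

Set Implicit Arguments.
Unset Strict Implicit.
Unset Printing Implicit Defensive.

(* With a = 1 the value i + j b of a square is its own least representative
   in its residue class as soon as it is below c, so an L-shape is related
   to T exactly when its values are 0, 1, ..., c - 1, each taken once.  For
   H1 these are the abscissas of its single row.  The other shapes have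
   width b, so a square is recovered from the base-b digits of its value,
   and it lies in L(b, h, w, 1) exactly when its value is below h b - w; the
   parameters of the statement are chosen so that h b - w = c, and the notch
   width b - (c mod b) is below b because gcd(b, c) = 1 forbids b | c. *)

Lemma mem_Lsquares l h w y p : (p \in Lsquares l h w y) = inL l h w y p.1 p.2.
Proof.
case: p => i j; rewrite /Lsquares mem_filter /=.
case: (boolP (inL l h w y i j)) => //= /and3P [il jh _].
by apply: allpairs_f; rewrite mem_iota.
Qed.

Lemma uniq_Lsquares l h w y : uniq (Lsquares l h w y).
Proof.
apply/filter_uniq/allpairs_uniq; try exact: iota_uniq.
by move=> [? ?] [? ?] _ _ [-> ->].
Qed.

Lemma related_of_perm_iota a b c H :
  perm_eq (map (sqval a b) H) (iota 0 c) -> related a b c H.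
Proof.
move=> valsH; have mem_vals v : (v \in map (sqval a b) H) = (v < c).
  by rewrite (perm_mem valsH) mem_iota.
split.
- by rewrite -(size_map (sqval a b)) (perm_size valsH) size_iota.
- move=> k kc; rewrite -(count_map _ (fun v => v %% c == k)) (permP valsH).
  rewrite (@eq_in_count _ _ (pred1 k)) ?count_uniq_mem ?iota_uniq ?mem_iota ?kc //.
  by move=> v; rewrite mem_iota => /= vc; rewrite modn_small.
- move=> p pH s t sp_eq; have pc : sqval a b p < c by rewrite -mem_vals map_f.
  by rewrite -(modn_small pc) -sp_eq leq_mod.
Qed.

Lemma Lsquares_row l w : Lsquares l 1 w 0 = [seq (i, 0) | i <- iota 0 l].
Proof.
rewrite /Lsquares allpairs1r; apply/all_filterP/allP => _ /mapP [i il ->].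
by move: il; rewrite mem_iota /inL /= andbF => ->.
Qed.

Lemma sqval1_row b l w : map (sqval 1 b) (Lsquares l 1 w 0) = iota 0 l.
Proof.
by rewrite Lsquares_row -map_comp -[RHS]map_id; apply: eq_map => i;
  rewrite /= /sqval muln1 mul0n addn0.
Qed.

Lemma sqval1K b : 0 < b ->
  {in [pred p : nat * nat | p.1 < b], cancel (sqval 1 b) (fun v => (v %% b, v %/ b))}.
Proof.
move=> b_gt0 [i j] /= ib; rewrite /sqval muln1 addnC.
by rewrite modnMDl divnMDl // modn_small // divn_small // addn0.
Qed.

Lemma inL_notched b h w i j : w < b -> i < b ->
  inL b h w 1 i j = (i + j * b < h * b - w).
Proof.
move=> wb ib; rewrite /inL ib /=.
have [jh|hj] := ltnP j h; last by apply/esym/negbTE; rewrite -leqNgt; nia.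
have [top_row|below] := leqP (h - 1) j.
  have -> : j = h - 1 by lia.
  by rewrite andbT -ltnNge; nia.
by rewrite andbF; symmetry; nia.
Qed.

Lemma sqval1_notched b h w : w < b ->
  perm_eq (map (sqval 1 b) (Lsquares b h w 1)) (iota 0 (h * b - w)).
Proof.
move=> wb; have b_gt0 : 0 < b by lia.
have digitsL p : p \in Lsquares b h w 1 -> p.1 < b.
  by case: p => i j; rewrite mem_Lsquares => /and3P [].
apply: uniq_perm; rewrite ?iota_uniq //.
  rewrite map_inj_in_uniq ?uniq_Lsquares // => p q pL qL.
  exact: (can_in_inj (sqval1K b_gt0)) (digitsL p pL) (digitsL q qL).
move=> v; rewrite mem_iota /=; apply/mapP/idP.
  move=> [[i j] pL ->]; have ib := digitsL _ pL.
  by move: pL; rewrite mem_Lsquares inL_notched // /sqval muln1.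
move=> vL; exists (v %% b, v %/ b); last by rewrite /sqval /= muln1 addnC -divn_eq.
by rewrite mem_Lsquares inL_notched ?ltn_mod // addnC -divn_eq.
Qed.

Lemma related_row b c : related 1 b c (Lsquares c 1 b 0).
Proof. by apply: related_of_perm_iota; rewrite sqval1_row. Qed.

Lemma related_notched b c h w : w < b -> h * b = c + w ->
  related 1 b c (Lsquares b h w 1).
Proof.
move=> wb hbE; apply: related_of_perm_iota.
by rewrite (_ : c = h * b - w) ?sqval1_notched // hbE addnK.
Qed.

Lemma row_Lshape_related b c : b < c ->
  is_Lshape c 1 b 0 /\ related 1 b c (Lsquares c 1 b 0) /\
  Ldelta 1 b c c 1 b 0 = 1%R /\ Ltheta 1 b c c 1 b 0 = 0%R.
Proof.
move=> bc; split; [|split; [|split]].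
- by rewrite /is_Lshape bc.
- exact: related_row.
- by rewrite /Ldelta muln1 mul0n subr0 divff // pnatr_eq0 -lt0n; lia.
- by rewrite /Ltheta mul1n muln1 subrr mul0r.
Qed.

Lemma notched_Lshape_related b c h w : w < b -> 1 < h -> h * b = c + w ->
  is_Lshape b h w 1 /\ related 1 b c (Lsquares b h w 1) /\
  Ldelta 1 b c b h w 1 = 0%R /\ Ltheta 1 b c b h w 1 = 1%R.
Proof.
move=> wb h_gt1 hbE; split; [|split; [|split]].
- by rewrite /is_Lshape wb h_gt1.
- exact: related_notched wb hbE.
- by rewrite /Ldelta muln1 mul1n subrr mul0r.
- have c_gt0 : 0 < c.
    by rewrite -(ltn_add2r w) add0n -hbE (leq_trans wb) // leq_pmull // ltnW.
  by rewrite /Ltheta muln1 hbE natrD addrK divff // pnatr_eq0 -lt0n.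
Qed.

Lemma modn_gt0_coprime b c : 1 < b -> coprime b c -> 0 < c %% b.
Proof.
move=> b_gt1; rewrite -coprime_modr lt0n.
by apply: contraTneq => ->; rewrite /coprime gcdn0 gtn_eqF.
Qed.

Theorem lemma12 (b c : nat) :
  1 < b -> b < c -> coprime b c ->
  (is_Lshape c 1 b 0 /\ related 1 b c (Lsquares c 1 b 0) /\
   Ldelta 1 b c c 1 b 0 = 1%R /\ Ltheta 1 b c c 1 b 0 = 0%R) /\
  (c < 2 * b ->
     is_Lshape b 2 (2 * b - c) 1 /\ related 1 b c (Lsquares b 2 (2 * b - c) 1) /\
     Ldelta 1 b c b 2 (2 * b - c) 1 = 0%R /\ Ltheta 1 b c b 2 (2 * b - c) 1 = 1%R) /\
  (2 * b < c ->
     is_Lshape b (1 + c %/ b) (b - c %% b) 1 /\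
     related 1 b c (Lsquares b (1 + c %/ b) (b - c %% b) 1) /\
     Ldelta 1 b c b (1 + c %/ b) (b - c %% b) 1 = 0%R /\
     Ltheta 1 b c b (1 + c %/ b) (b - c %% b) 1 = 1%R).
Proof.
move=> b_gt1 bc cop; split; [|split] => [|c2b|c2b].
- exact: row_Lshape_related.
- have wb : 2 * b - c < b by lia.
  have hbE : 2 * b = c + (2 * b - c) by lia.
  exact: notched_Lshape_related wb (ltnSn 1) hbE.
- have r_gt0 := modn_gt0_coprime b_gt1 cop.
  have r_lt_b : c %% b < b by rewrite ltn_mod (ltnW b_gt1).
  have wb : b - c %% b < b by rewrite ltn_subrL r_gt0 (ltnW b_gt1).
  have h_gt1 : 1 < 1 + c %/ b by rewrite add1n ltnS divn_gt0 ?(ltnW b_gt1) // ltnW.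
  have hbE : (1 + c %/ b) * b = c + (b - c %% b).
    by rewrite {2}(divn_eq c b) mulnDl mul1n -addnA subnKC ?(ltnW r_lt_b) // addnC.
  exact: notched_Lshape_related wb h_gt1 hbE.
Qed.
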